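(* Consider single-input single-output discrete-time state-space models (SSMs) $$x_{k+1}=\mathbf{A}x_k+\mathbf{B}u_k,\qquad y_k=\mathbf{C}x_k+\mathbf{D}u_k,\qquad x_0=0,$$ whose state matrix $\mathbf{A}\in\mathbb{R}^{d\times d}$ is a companion matrix. Such companion SSMs can represent each of the following. (i) (ARIMA) Let $p,q,r\ge 0$ be integers and $\phi_1,\dots,\phi_p,\theta_1,\dots,\theta_q\in\mathbb{R}$. Let $L$ denote the lag operator, $(Lz)_k=z_{k-1}$, and consider the ARIMA$(p,r,q)$ relation $$\Big(1-\sum_{i=1}^p\phi_iL^i\Big)(1-L)^r y_k=\Big(1+\sum_{j=1}^q\theta_jL^j\Big)u_k,$$ which, with zero initial conditions ($u_k=y_k=0$ for $k<0$), determines the output sequence $(y_k)_{k\ge0}$ causally from the input sequence $(u_k)_{k\ge0}$. Then there exist $d\ge 1$, a companion matrix $\mathbf{A}\in\mathbb{R}^{d\times d}$, and $\mathbf{B}\in\mathbb{R}^{d\times1}$, $\mathbf{C}\in\mathbb{R}^{1\times d}$, $\mathbf{D}\in\mathbb{R}$ such that, for every input sequence $(u_k)_{k\ge0}$, the SSM output equals $(y_k)_{k\ge0}$. (ii) (Simple exponential smoothing) Let $0<\alpha<1$ and $p\ge1$. There exists a companion SSM with state dimension $d=p$ such that, for every input sequence $(u_k)_{k\ge0}$ (the observed time series) and every $k\ge p$, $$\mathbf{C}x_k=\alpha u_{k-1}+\alpha(1-\alpha)u_{k-2}+\dots+\alpha(1-\alpha)^{p-1}u_{k-p},$$ i.e.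 the SSM reproduces the simple exponential smoothing recursion $y_k=\sum_{i=1}^p\alpha(1-\alpha)^{i-1}y_{k-i}$ when its input is the series itself. (iii) (Controllable LTI systems) Let $\mathbf{A}\in\mathbb{R}^{d\times d}$, $\mathbf{B}\in\mathbb{R}^{d\times 1}$, $\mathbf{C}\in\mathbb{R}^{1\times d}$, $\mathbf{D}\in\mathbb{R}$ define a discrete-time linear time-invariant system with $(\mathbf{A},\mathbf{B})$ controllable, i.e. the Krylov matrix $[\mathbf{B},\mathbf{A}\mathbf{B},\dots,\mathbf{A}^{d-1}\mathbf{B}]$ is invertible. Then there exist a companion matrix $\mathbf{G}\in\mathbb{R}^{d\times d}$ similar to $\mathbf{A}$ and $\mathbf{B}'\in\mathbb{R}^{d\times1}$, $\mathbf{C}'\in\mathbb{R}^{1\times d}$ such that the SSM $(\mathbf{G},\mathbf{B}',\mathbf{C}',\mathbf{D})$ has the same input–output map (from zero initial state) as $(\mathbf{A},\mathbf{B},\mathbf{C},\mathbf{D})$.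
   Context: A $d\times d$ companion matrix is a matrix of the form $$\mathbf{A}=\begin{bmatrix}0&0&\cdots&0&a_0\\1&0&\cdots&0&a_1\\0&1&\cdots&0&a_2\\\vdots&&\ddots&\vdots&\vdots\\0&0&\cdots&1&a_{d-1}\end{bmatrix},$$ i.e. ones on the first subdiagonal, an arbitrary last column $a=(a_0,\dots,a_{d-1})^T\in\mathbb{R}^d$, and zeros elsewhere. Equivalently $\mathbf{A}=\mathbf{S}+a e_d^T$ where $\mathbf{S}$ is the $d\times d$ down-shift matrix (ones on the first subdiagonal, zeros elsewhere) and $e_d$ is the $d$-th standard basis vector. With $x_0=0$, the state is $x_k=\sum_{j=0}^{k-1}\mathbf{A}^{k-1-j}\mathbf{B}u_j$. The paper states this result informally as ''A companion state matrix SSM can represent ARIMA, exponential smoothing, and controllable linear time-invariant systems''; the three items give the precise meaning of ''represent'' used in its proof. *)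

From HB Require Import structures.
From mathcomp Require Import all_boot all_order all_algebra.
From mathcomp Require Import reals.
Set Implicit Arguments. Unset Strict Implicit. Unset Printing Implicit Defensive.
Import Order.TTheory GRing.Theory Num.Theory.
Local Open Scope ring_scope.

Section Defs.
Variable R : realType.

Definition companion (d : nat) (a : 'cV[R]_d) : 'M[R]_d :=
  \matrix_(i < d, j < d)
    ((i == j.+1 :> nat)%:R + (j.+1 == d)%:R * a i ord0).

Definition is_companion (d : nat) (A : 'M[R]_d) : Prop :=
  exists a : 'cV[R]_d, A = companion a.

Fixpoint ssm_state (d : nat) (A : 'M[R]_d) (B : 'cV[R]_d) (u : nat -> R)
    (k : nat) : 'cV[R]_d :=
  match k with
  | 0 => 0
  | k'.+1 => A *m ssm_state A B u k' + u k' *: B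
  end.

Definition ssm_out (d : nat) (A : 'M[R]_d) (B : 'cV[R]_d) (C : 'rV[R]_d)
    (D : R) (u : nat -> R) (k : nat) : R :=
  (C *m ssm_state A B u k) ord0 ord0 + D * u k.

(* Apply the lag polynomial P(L) to a sequence z (z_k = 0 for k < 0):
   (P(L) z)_k = sum_i P_i z_{k-i}. *)
Definition lagop (P : {poly R}) (z : nat -> R) (k : nat) : R :=
  \sum_(i < k.+1) P`_i * z (k - i)%N.

Definition ar_poly (p : nat) (phi : nat -> R) : {poly R} :=
  1 - \sum_(1 <= i < p.+1) phi i *: 'X^i.

Definition ma_poly (q : nat) (theta : nat -> R) : {poly R} :=
  1 + \sum_(1 <= j < q.+1) theta j *: 'X^j.

Definition arima_rel (p r q : nat) (phi theta : nat -> R) (u y : nat -> R) : Prop :=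
  forall k, lagop (ar_poly p phi * (1 - 'X) ^+ r) y k = lagop (ma_poly q theta) u k.

Definition krylov (d : nat) (A : 'M[R]_d) (B : 'cV[R]_d) : 'M[R]_d :=
  \matrix_(i < d, j < d) ((A ^+ j *m B) i ord0).

Definition mx_similar (d : nat) (G A : 'M[R]_d) : Prop :=
  exists2 P : 'M[R]_d, P \in unitmx & G = P *m A *m invmx P.

End Defs.

From HB Require Import structures.
From mathcomp Require Import all_boot all_order all_algebra.
From mathcomp Require Import reals.
Import Order.TTheory GRing.Theory Num.Theory.
Local Open Scope ring_scope.
From mathcomp Require Import zify.
Set Implicit Arguments. Unset Strict Implicit. Unset Printing Implicit Defensive.

(* A companion matrix shifts the state down by one slot and feeds the last
   coordinate back through its last column.  Unrolling the recursion, if the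
   last column holds -P_(n+1), ..., -P_1 and the input vector c_(n+1), ..., c_1,
   the last state coordinate w satisfies P(L) w = c(L) u.  With c = Q - Q_0 P
   and D = Q_0 the output w + D u then satisfies P(L) y = Q(L) u, which for
   P_0 = 1 determines y causally: this covers ARIMA.  With zero feedback and
   B = e_1 the companion matrix is a shift register holding the last d inputs,
   so any moving average, e.g. exponential smoothing, is read off by C.  For
   controllable (A, B), the Krylov matrix K satisfies K G = A K where G is the
   companion matrix whose last column is K^-1 A^d B, and the change of state
   x = K x' preserves the input-output map. *)

Section CompanionSSM.
Variable R : realType.

Lemma sum_nat_eq_mul (F : nat -> R) i n :
  \sum_(j < n) (j == i :> nat)%:R * F j = if (i < n)%N then F i else 0.
Proof.
by under eq_bigr do rewrite mulr_natl mulrb; rewrite -big_mkcond big_ord1_eq.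
Qed.

Lemma companion_mulmxE n (a x : 'cV[R]_n.+1) (i : 'I_n.+1) :
  (companion a *m x) i ord0 =
  (if (0 < i)%N then x (inord i.-1) ord0 else 0) + a i ord0 * x ord_max ord0.
Proof.
rewrite mxE; under eq_bigr do rewrite mxE mulrDl.
rewrite big_split /=; congr (_ + _).
  have := ltn_ord i; case: (nat_of_ord i) => [|i'] /= lti.
    by rewrite big1 // => j _; rewrite mul0r.
  rewrite (eq_bigr (fun j : 'I_n.+1 => (j == i' :> nat)%:R * x (inord j) ord0)).
    by rewrite (sum_nat_eq_mul (fun j => x (inord j) ord0)) (ltnW lti).
  by move=> j _; rewrite eqSS eq_sym inord_val.
rewrite (eq_bigr (fun j : 'I_n.+1 =>
  (j == n :> nat)%:R * (a i ord0 * x (inord j) ord0))).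
  rewrite (sum_nat_eq_mul (fun j => a i ord0 * x (inord j) ord0)) ltnSn.
  by congr (_ * x _ _); apply: val_inj; rewrite /= inordK.
by move=> j _; rewrite inord_val -mulrA.
Qed.

Lemma krylov_mulmx_companion d (A : 'M[R]_d) (B a : 'cV[R]_d) :
  krylov A B *m a = A ^+ d *m B ->
  krylov A B *m companion a = A *m krylov A B.
Proof.
move=> Ka; apply/matrixP => i j; rewrite [LHS]mxE [RHS]mxE.
under eq_bigr do rewrite [companion _ _ _]mxE mulrDr mulrCA.
rewrite big_split -mulr_sumr /=.
rewrite (eq_bigr (fun l : 'I_d => (l == j.+1 :> nat)%:R * (A ^+ l *m B) i ord0));
  last by move=> l _; rewrite mxE mulrC.
rewrite (sum_nat_eq_mul (fun l => (A ^+ l *m B) i ord0)).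
have -> : \sum_l krylov A B i l * a l ord0 = (A ^+ d *m B) i ord0.
  by rewrite -Ka mxE.
have -> : \sum_l A i l * krylov A B l j = (A ^+ j.+1 *m B) i ord0.
  by rewrite exprS -mulmxA mxE; apply: eq_bigr => l _; rewrite mxE.
case: ltnP => [ltjd | ]; first by rewrite (ltn_eqF ltjd) mul0r addr0.
move=> dlej; have /eqP ej : j.+1 == d by rewrite eqn_leq dlej ltn_ord.
by rewrite ej eqxx mul1r add0r.
Qed.

Lemma ssm_state_intertwine d (T G A : 'M[R]_d) (B' B : 'cV[R]_d) u k :
  T *m G = A *m T -> T *m B' = B ->
  T *m ssm_state G B' u k = ssm_state A B u k.
Proof.
move=> TG TB; elim: k => [|k IHk] /=; first by rewrite mulmx0.
by rewrite mulmxDr mulmxA TG -mulmxA IHk -scalemxAr TB.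
Qed.

Lemma ssm_out_intertwine d (T G A : 'M[R]_d) (B' B : 'cV[R]_d) C D u k :
  T *m G = A *m T -> T *m B' = B ->
  ssm_out G B' (C *m T) D u k = ssm_out A B C D u k.
Proof. by move=> TG TB; rewrite /ssm_out -mulmxA (ssm_state_intertwine _ _ TG TB). Qed.

Lemma controllable_companion_form d (A : 'M[R]_d) (B : 'cV[R]_d) C D :
  krylov A B \in unitmx ->
  exists (G : 'M[R]_d) (B' : 'cV[R]_d) (C' : 'rV[R]_d),
    is_companion G /\ mx_similar G A /\
    forall u k, ssm_out G B' C' D u k = ssm_out A B C D u k.
Proof.
set K := krylov A B => unitK.
set a := invmx K *m (A ^+ d *m B).
have KG : K *m companion a = A *m K.
  by apply: krylov_mulmx_companion; rewrite mulmxA mulmxV ?mul1mx.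
have KB : K *m (invmx K *m B) = B by rewrite mulmxA mulmxV ?mul1mx.
exists (companion a), (invmx K *m B), (C *m K); split; first by exists a.
split; last by move=> u k; apply: ssm_out_intertwine.
exists (invmx K); first by rewrite unitmx_inv.
by rewrite invmxK -mulmxA -KG mulmxA mulVmx ?mul1mx.
Qed.

Section CompanionState.
Variables (n : nat) (a b u : nat -> R).

Local Notation x :=
  (ssm_state (companion (\col_(j < n.+1) a j)) (\col_(j < n.+1) b j) u).

Lemma companion_ssm_stateE k (i : 'I_n.+1) :
  x k i ord0 = \sum_(m < k | (m <= i)%N)
    (a (i - m)%N * x (k.-1 - m)%N ord_max ord0 + b (i - m)%N * u (k.-1 - m)%N).
Proof.
elim: k i => [|k IHk] i /=; first by rewrite big_ord0 mxE.
rewrite [LHS]mxE companion_mulmxE !mxE big_mkcond big_ord_recl /= !subn0.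
rewrite (mulrC (u k)) -addrA addrC; congr (_ + _).
case: i => [[|i] lti] /=; first by rewrite big1.
rewrite IHk inordK ?(ltnW lti) // big_mkcond; apply: eq_bigr => m _.
by rewrite /bump leq0n add1n ltnS subSS subnS predn_sub.
Qed.

End CompanionState.

Lemma shift_register_state n (u : nat -> R) k (i : 'I_n.+1) : (i < k)%N ->
  ssm_state (companion (\col_(j < n.+1) 0)) (\col_(j < n.+1) (j == 0 :> nat)%:R) u k
    i ord0 = u (k.-1 - i)%N.
Proof.
move=> ltik; rewrite (companion_ssm_stateE (fun=> 0 : R) (fun j => (j == 0 :> nat)%:R)).
rewrite (eq_bigr (fun m : 'I_k => if (m == i :> nat) then u (k.-1 - m)%N else 0)).
  rewrite -big_mkcondr.
  by rewrite (big_ord1_cond_eq _ (fun m => u (k.-1 - m)%N) (fun m => m <= i)%N) ltik leqnn.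
move=> m lemi; have -> : (i - m == 0)%N = (m == i :> nat) by rewrite subn_eq0 eqn_leq lemi.
by rewrite mul0r add0r mulr_natl mulrb.
Qed.

Lemma exp_smoothing_companion (alpha : R) p : (1 <= p)%N ->
  exists (A : 'M[R]_p) (B : 'cV[R]_p) (C : 'rV[R]_p),
    is_companion A /\
    forall u k, (p <= k)%N ->
      (C *m ssm_state A B u k) ord0 ord0
        = \sum_(1 <= i < p.+1) alpha * (1 - alpha) ^+ i.-1 * u (k - i)%N.
Proof.
case: p => // n _.
exists (companion (\col_(j < n.+1) 0)), (\col_(j < n.+1) (j == 0 :> nat)%:R).
exists (\row_(j < n.+1) (alpha * (1 - alpha) ^+ j)); split; first by eexists.
move=> u k lenk; rewrite mxE big_add1 big_mkord; apply: eq_bigr => i _.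
rewrite mxE shift_register_state ?subnS ?predn_sub //.
exact: leq_trans (ltn_ord i) lenk.
Qed.

Lemma lagopE (P : {poly R}) z k :
  lagop P z k = P`_0 * z k + \sum_(i < k) P`_i.+1 * z (k.-1 - i)%N.
Proof.
rewrite /lagop big_ord_recl subn0; congr (_ + _); apply: eq_bigr => i _.
by rewrite /bump /= subnS predn_sub.
Qed.

Lemma lagop_combination (P : {poly R}) (y z1 z2 : nat -> R) c k :
  (forall t, y t = z1 t + c * z2 t) ->
  lagop P y k = lagop P z1 k + c * lagop P z2 k.
Proof.
move=> yE; rewrite /lagop mulr_sumr -big_split; apply: eq_bigr => i _.
by rewrite yE mulrDr mulrCA.
Qed.

Lemma lagopDZ (P Q : {poly R}) c z k :
  lagop (P + c *: Q) z k = lagop P z k + c * lagop Q z k.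
Proof.
rewrite /lagop mulr_sumr -big_split; apply: eq_bigr => i _.
by rewrite coefD coefZ mulrDl mulrA.
Qed.

Lemma lagop_inj (P : {poly R}) y y' : P`_0 != 0 ->
  (forall k, lagop P y k = lagop P y' k) -> y =1 y'.
Proof.
move=> P0 eqy; elim/ltn_ind => k IHk; move: (eqy k); rewrite !lagopE.
rewrite (eq_bigr (fun i : 'I_k => P`_i.+1 * y' (k.-1 - i)%N)).
  by move=> /addIr/(mulfI P0).
by move=> i _; rewrite IHk //; have := ltn_ord i; lia.
Qed.

Lemma lagop_companion_last n (P c : {poly R}) u k :
  P`_0 = 1 -> c`_0 = 0 -> (size P <= n.+2)%N -> (size c <= n.+2)%N ->
  let x := ssm_state (companion (\col_(j < n.+1) - P`_(n.+1 - j)))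
                     (\col_(j < n.+1) c`_(n.+1 - j)) u in
  lagop P (fun t => x t ord_max ord0) k = lagop c u k.
Proof.
move=> P0 c0 szP szc x; rewrite !lagopE P0 c0 mul1r mul0r add0r.
rewrite [x k _ _](companion_ssm_stateE (fun j => - P`_(n.+1 - j))
                                       (fun j => c`_(n.+1 - j))).
rewrite big_mkcond (eq_bigr (fun m : 'I_k =>
  - (P`_m.+1 * x (k.-1 - m)%N ord_max ord0) + c`_m.+1 * u (k.-1 - m)%N)) => [|m _].
  by rewrite big_split sumrN /= addrAC addNr add0r.
case: leqP => [lemn | ltnm]; first by rewrite /= subSn ?leq_subr // subKn // mulNr.
by rewrite !nth_default ?mul0r ?oppr0 ?addr0 // ?(leq_trans szP) ?(leq_trans szc).
Qed.

Lemma companion_realizes_lagop (P Q : {poly R}) : P`_0 = 1 ->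
  exists d (A : 'M[R]_d) (B : 'cV[R]_d) (C : 'rV[R]_d) (D : R),
    (1 <= d)%N /\ is_companion A /\
    forall u k, lagop P (ssm_out A B C D u) k = lagop Q u k.
Proof.
move=> P0; set D := Q`_0; set c := Q - D *: P.
have c0 : c`_0 = 0 by rewrite coefB coefZ P0 mulr1 subrr.
set n := maxn (size P) (size c).
have [szP szc] : (size P <= n.+2)%N /\ (size c <= n.+2)%N.
  by rewrite !leqW ?leq_maxl ?leq_maxr.
set A := companion (\col_(j < n.+1) - P`_(n.+1 - j)).
set B := \col_(j < n.+1) c`_(n.+1 - j).
exists n.+1, A, B, (delta_mx 0 ord_max), D; do 2!split => //; first by eexists.
move=> u k; have outE t : ssm_out A B (delta_mx 0 ord_max) D u t
    = ssm_state A B u t ord_max ord0 + D * u t by rewrite /ssm_out -rowE mxE.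
by rewrite (lagop_combination _ _ outE) lagop_companion_last // -lagopDZ subrK.
Qed.

Lemma arima_ar_coef0 p r (phi : nat -> R) : (ar_poly p phi * (1 - 'X) ^+ r)`_0 = 1.
Proof.
rewrite coef0M -!horner_coef0 horner_exp !hornerE horner_sum.
rewrite big_nat big1 ?subr0 ?expr1n ?mulr1 //.
by move=> i /andP[lt0i _]; rewrite hornerZ hornerXn expr0n (gtn_eqF lt0i) mulr0.
Qed.

Lemma arima_companion p r q (phi theta : nat -> R) :
  exists d (A : 'M[R]_d) (B : 'cV[R]_d) (C : 'rV[R]_d) (D : R),
    (1 <= d)%N /\ is_companion A /\
    forall u y, arima_rel p r q phi theta u y -> forall k, ssm_out A B C D u k = y k.
Proof.
have AR0 := arima_ar_coef0 p r phi.
have [d [A [B [C [D [d_gt0 [compA realizes]]]]]]] :=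
  companion_realizes_lagop (ma_poly q theta) AR0.
exists d, A, B, C, D; do 2!split => //.
move=> u y arima; apply: (lagop_inj (P := ar_poly p phi * (1 - 'X) ^+ r)).
  by rewrite AR0 oner_neq0.
by move=> k; rewrite realizes arima.
Qed.

End CompanionSSM.

Theorem proposition1 (R : realType) :
  (* (i) ARIMA *)
  (forall (p r q : nat) (phi theta : nat -> R),
     exists (d : nat) (A : 'M[R]_d) (B : 'cV[R]_d) (C : 'rV[R]_d) (D : R),
       (1 <= d)%N /\ is_companion A /\
       forall u y : nat -> R, arima_rel p r q phi theta u y ->
         forall k, ssm_out A B C D u k = y k)
  /\
  (* (ii) simple exponential smoothing *)
  (forall (alpha : R) (p : nat), 0 < alpha -> alpha < 1 -> (1 <= p)%N ->
     exists (A : 'M[R]_p) (B : 'cV[R]_p) (C : 'rV[R]_p),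
       is_companion A /\
       forall (u : nat -> R) (k : nat), (p <= k)%N ->
         (C *m ssm_state A B u k) ord0 ord0
           = \sum_(1 <= i < p.+1) alpha * (1 - alpha) ^+ (i.-1) * u (k - i)%N)
  /\
  (* (iii) controllable LTI systems *)
  (forall (d : nat) (A : 'M[R]_d) (B : 'cV[R]_d) (C : 'rV[R]_d) (D : R),
     krylov A B \in unitmx ->
     exists (G : 'M[R]_d) (B' : 'cV[R]_d) (C' : 'rV[R]_d),
       is_companion G /\ mx_similar G A /\
       forall (u : nat -> R) (k : nat), ssm_out G B' C' D u k = ssm_out A B C D u k).
Proof.
split; first exact: arima_companion.
split; first by move=> alpha p _ _; exact: exp_smoothing_companion.
exact: controllable_companion_form.
Qed.
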